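(* Let $N\ge 2$ and $T\ge 1$ be integers, let $a_1,\ldots,a_N$ be real numbers with $a_1+\cdots+a_N=1$, and let $\mu_1,\ldots,\mu_T$ be real numbers. Let $J$ be the $((N-1)T+1)\times((N-1)T+1)$ real matrix defined as follows (with $e_k$ denoting the $k$-th standard basis row vector of length $(N-1)T+1$): - for $i=1,\ldots,(N-2)T+1$, the $i$-th row of $J$ is $e_{i+T}$; - for $m=1,\ldots,T$, the $((N-2)T+1+m)$-th row of $J$ is $r_m$, where $r_0:=e_{(N-1)T+1}$ and recursively $$r_m=\mu_m\Big(a_1\, r_{m-1}+\sum_{l=2}^{N} a_l\, e_{(N-l)T+m}\Big),\qquad m=1,\ldots,T.$$ Then the characteristic polynomial $\det(\lambda I-J)$ of $J$ equals $$p(\lambda)=\lambda^{(N-1)T+1}-(\mu_1\cdots\mu_T)\,\big(a_1\lambda^{N-1}+a_2\lambda^{N-2}+\cdots+a_{N-1}\lambda+a_N\big)^{T}.$$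
   Context: Motivation/setting: for a $C^1$ map $f:\mathbb{R}\to\mathbb{R}$ with a $T$-cycle $x_0^*,\ldots,x_{T-1}^*$ and the delayed feedback control $x(k+1)=f(x(k))+u(k)$, $u(k)=(a_1-1)f(x(k))+a_2f(x(k-T))+\cdots+a_Nf(x(k-(N-1)T))$, define $G:\mathbb{R}^{(N-1)T+1}\to\mathbb{R}^{(N-1)T+1}$ by $G(x_1,\ldots,x_{(N-1)T+1})=(x_2,\ldots,x_{(N-1)T+1},\,a_1f(x_{(N-1)T+1})+a_2f(x_{(N-2)T+1})+\cdots+a_Nf(x_1))$ and $F=G^T$. The matrix $J$ above is the Jacobian of $F$ at the point $(x_0^*,\ldots,x^*_{(N-1)T})$ (indices mod $T$), with $\mu_j$ the derivatives of $f$ along the cycle; the statement concerns the explicitly defined matrix for arbitrary real $\mu_j$. *)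

From HB Require Import structures.
From mathcomp Require Import all_boot all_order all_algebra.
Set Implicit Arguments. Unset Strict Implicit. Unset Printing Implicit Defensive.
Import Order.TTheory GRing.Theory Num.Theory.
Local Open Scope ring_scope.

(* Dimension (N-1)T+1.  Indices of matrices/vectors are 0-based here:
   paper index k (1-based) corresponds to Rocq index k-1.
   Sequences a_1..a_N and mu_1..mu_T are given as functions nat -> R,
   used only at the (1-based) indices 1..N resp. 1..T. *)
Definition dimJ (N T : nat) : nat := ((N - 1) * T).+1.

Definition ebas (n k : nat) {R : ringType} : 'rV[R]_n :=
  \row_(j < n) (if (j == k :> nat) then 1 else 0).

Fixpoint rvec {R : ringType} (N T : nat) (a mu : nat -> R) (m : nat)
  : 'rV[R]_(dimJ N T) :=
  match m with
  | 0 => ebas (dimJ N T) ((N - 1) * T)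
  | m'.+1 => mu m *: (a 1%N *: rvec N T a mu m'
              + \sum_(2 <= l < N.+1) a l *: ebas (dimJ N T) ((N - l) * T + m - 1))
  end.

Definition Jmat {R : ringType} (N T : nat) (a mu : nat -> R)
  : 'M[R]_(dimJ N T) :=
  \matrix_(i < dimJ N T)
     (if (i <= (N - 2) * T)%N then ebas (dimJ N T) (i + T)
      else rvec N T a mu (i - (N - 2) * T)%N).

From mathcomp Require Import all_boot all_order all_algebra.
From mathcomp Require Import ring.
Set Implicit Arguments. Unset Strict Implicit. Unset Printing Implicit Defensive.
Import GRing.Theory.
Local Open Scope ring_scope.

(* Multiplying [lambda I - J] by two unitriangular polynomial matrices does not
   change its determinant.  On the right, the matrix with entries
   [lambda^((k-j)/T)] (for [j <= k], [k = j mod T]) adds to every column the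
   columns [T, 2T, ...] places further right, weighted by powers of [lambda];
   this turns the first [(N-2)T+1] rows [lambda e_i - e_(i+T)] into
   [- e_(i+T)].  On the left, subtracting [mu_m a_1] times row [(N-2)T+m] from
   row [(N-2)T+m+1] removes the recursive term [a_1 r_(m-1)] of [r_m].
   Expanding along the shifted rows leaves, up to the sign [(-1)^(T-1)], the
   determinant of a [T x T] cyclic bidiagonal matrix with diagonal entries
   [- mu_m p(lambda)], where [p(lambda) = a_1 lambda^(N-1) + ... + a_N], and
   superdiagonal entries [lambda^(N-1)] ([lambda^N] in the corner); it equals
   [(-1)^T (mu_1 ... mu_T) p^T + (-1)^(T-1) lambda^((N-1)T+1)]. *)

Section Determinants.
Variable R : comNzRingType.

Lemma expand_det_row_delta n (A : 'M[R]_n) i0 j0 :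
  (forall j, j != j0 -> A i0 j = 0) -> \det A = A i0 j0 * cofactor A i0 j0.
Proof.
move=> A0; rewrite (expand_det_row _ i0) (bigD1 j0) //= big1 ?addr0 // => j /A0 ->.
by rewrite mul0r.
Qed.

Lemma det_shift_rows k T (A : 'M[R]_(k + T)) :
  (forall i j : 'I_(k + T), (i < k)%N -> A i j = - (j == (i + T)%N :> nat)%:R) ->
  \det A = (-1) ^+ (k * T.+1)%N *
    \det (\matrix_(i, j) A (rshift k i) (widen_ord (leq_addl k T) j)).
Proof.
elim: k A => [|k IHk] A Atop.
  rewrite mul0n expr0 mul1r; congr (\det _); apply/matrixP => i j; rewrite mxE.
  by congr (A _ _); apply/val_inj.
have ltTn : (T < k.+1 + T)%N by rewrite addSn ltnS leq_addl.
rewrite (expand_det_row_delta (i0 := ord0) (j0 := Ordinal ltTn)); last first.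
  by move=> j; rewrite -val_eqE => /negPf jT; rewrite Atop // add0n jT oppr0.
rewrite Atop //= eqxx /cofactor IHk; last first.
  move=> i j ltik; rewrite !mxE Atop //= /bump.
  case: (ltnP j T) => [ltjT | leTj]; last by rewrite add1n addSn eqSS.
  by rewrite add0n add1n !ltn_eqF ?ltn_addl.
rewrite mulr1n add0n !mulrA -exprS -exprD -mulSn; congr (_ * \det _).
apply/matrixP => i j; rewrite !mxE; congr (A _ _); apply/val_inj => //=.
by rewrite /bump leqNgt ltn_ord.
Qed.

Lemma bottom_ord_subproof n T (leTn : (T <= n)%N) (i : 'I_T) : (n - T + i < n)%N.
Proof. by rewrite -ltn_subRL subKn. Qed.

Lemma det_shift_rows_leq n T (A : 'M[R]_n) (leTn : (T <= n)%N) :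
  (forall i j : 'I_n, (i < n - T)%N -> A i j = - (j == (i + T)%N :> nat)%:R) ->
  \det A = (-1) ^+ ((n - T) * T.+1)%N *
    \det (\matrix_(i, j) A (Ordinal (bottom_ord_subproof leTn i)) (widen_ord leTn j)).
Proof.
have [k nE] : exists k, n = (k + T)%N by exists (n - T)%N; rewrite subnK.
subst n => Atop; rewrite det_shift_rows => [|i j ltik]; last by rewrite Atop ?addnK.
congr (_ * _); first by rewrite addnK.
apply: congr1; apply/matrixP => i j; rewrite !mxE.
by congr (A _ _); apply/val_inj; rewrite /= ?addnK.
Qed.

Definition cyclic_bidiag_mx t (d e : nat -> R) : 'M[R]_t.+1 :=
  \matrix_(i, j) ((if j == i :> nat then d i else 0)
                  + (if j == (i.+1 %% t.+1)%N :> nat then e i else 0)).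

Lemma det_cyclic_bidiag t (d e : nat -> R) :
  \det (cyclic_bidiag_mx t d e) = \prod_(i < t.+1) d i + (-1) ^+ t * \prod_(i < t.+1) e i.
Proof.
case: t => [|t]; first by rewrite det_mx11 !mxE !big_ord1 expr0 mul1r.
set A := cyclic_bidiag_mx _ _ _.
rewrite (expand_det_row _ ord_max) (bigD1 ord0) // (bigD1 ord_max) //= big1 ?addr0; last first.
  move=> j; rewrite -!val_eqE /= => /andP[j0 jmax].
  by rewrite !mxE modnn /= (negPf j0) (negPf jmax) addr0 mul0r.
rewrite !mxE modnn eqxx /= addr0 add0r addrC /cofactor.
have mod_succ (i : 'I_t.+1) : (i.+1 %% t.+2 = i.+1)%N by rewrite modn_small // ltnS.
have det_minor_diag : \det (row' ord_max (col' ord_max A)) = \prod_(i < t.+1) d i.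
  rewrite -det_tr det_trig => [|]; last first.
    apply/is_trig_mxP => i j ltij; rewrite !mxE !lift_max mod_succ.
    by rewrite (ltn_eqF ltij) ltn_eqF ?addr0 // leqW.
  by apply: eq_bigr => /= i _; rewrite !mxE !lift_max mod_succ eqxx (ltn_eqF (ltnSn i)) addr0.
have det_minor_corner : \det (row' ord_max (col' ord0 A)) = \prod_(i < t.+1) e i.
  rewrite det_trig => [|]; last first.
    apply/is_trig_mxP => i j ltij; rewrite !mxE lift_max lift0 mod_succ eqSS.
    by rewrite (gtn_eqF ltij) (gtn_eqF (leqW ltij)) addr0.
  by apply: eq_bigr => /= i _; rewrite !mxE lift_max lift0 mod_succ eqxx (gtn_eqF (ltnSn i)) add0r.
rewrite det_minor_diag det_minor_corner /= -signr_odd addnn odd_double expr0 addn0 !big_ord_recr /=.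
ring.
Qed.
End Determinants.

Section BasisRows.
Variable R : comNzRingType.

Lemma ebas_delta n (i : 'I_n) : ebas n i = delta_mx 0 i :> 'rV[R]_n.
Proof. by apply/rowP => j; rewrite !mxE eqxx -val_eqE; case: eqP. Qed.

Lemma ebas_mulmx n p (i : 'I_n) (A : 'M[R]_(n, p)) : ebas n i *m A = row i A.
Proof. by rewrite ebas_delta rowE. Qed.

Lemma map_ebas n k : map_mx (@polyC R) (ebas n k) = ebas n k.
Proof. by apply/rowP => j; rewrite !mxE; case: eqP. Qed.

Lemma ebas_mul_char_poly_mx n (i : 'I_n) (A : 'M[R]_n) :
  ebas n i *m char_poly_mx A = 'X *: ebas n i - map_mx (@polyC R) (row i A).
Proof.
by rewrite mulmxBr mul_mx_scalar -[in X in _ - X]map_ebas -map_mxM ebas_mulmx.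
Qed.

End BasisRows.

Section CharPolyJmat.
Variable R : comNzRingType.
Variables (N' t : nat) (a mu : nat -> R).
Local Notation N := N'.+2.
Local Notation T := t.+1.
Local Notation n := (dimJ N T).
Local Notation s := (N' * T)%N.
Local Notation J := (Jmat N T a mu).

Lemma dimJE : n = (s + T).+1.
Proof. by rewrite /dimJ subSS subn0 mulSn addnC. Qed.

Lemma dimJ_subT : (n - T = s.+1)%N.
Proof. by rewrite dimJE subSn ?leq_addl // addnK. Qed.

Lemma row_Jmat (i : 'I_n) :
  row i J = if (i <= s)%N then ebas n (i + T) else rvec N T a mu (i - s).
Proof. by rewrite rowK !subSS subn0. Qed.

Definition col_elim_coef (k j : nat) : {poly R} :=
  if ((j <= k) && (k %% T == j %% T))%N then 'X^((k - j) %/ T) else 0.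

Definition col_elim_mx : 'M[{poly R}]_n := \matrix_(k, j) col_elim_coef k j.

Definition row_elim_mx : 'M[{poly R}]_n :=
  \matrix_i (ebas n i - if (s < i)%N then (mu (i - s) * a 1)%:P *: ebas n i.-1 else 0).

Definition reduced_mx := row_elim_mx *m char_poly_mx J *m col_elim_mx.

Lemma det_reduced_mx : \det reduced_mx = char_poly J.
Proof.
have det_row_elim : \det row_elim_mx = 1.
  rewrite det_trig => [|]; last first.
    apply/is_trig_mxP => i j ltij; rewrite !mxE (gtn_eqF ltij).
    case: ifP => _; rewrite ?mxE ?subr0 //.
    by rewrite (gtn_eqF (leq_ltn_trans (leq_pred i) ltij)) mulr0 subr0.
  rewrite big1 // => i _; rewrite !mxE eqxx.
  case: ifP => [lt_si|_]; rewrite !mxE ?subr0 //.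
  by rewrite gtn_eqF ?mulr0 ?subr0 // ltn_predL (leq_ltn_trans (leq0n s) lt_si).
have det_col_elim : \det col_elim_mx = 1.
  rewrite det_trig => [|]; last first.
    by apply/is_trig_mxP => i j ltij; rewrite mxE /col_elim_coef leqNgt ltij.
  by rewrite big1 // => i _; rewrite mxE /col_elim_coef leqnn eqxx subnn div0n expr0.
by rewrite /reduced_mx !det_mulmx det_row_elim det_col_elim mul1r mulr1.
Qed.

Lemma col_elim_coef_shift i j :
  'X * col_elim_coef i j - col_elim_coef (i + T) j = - (j == (i + T)%N)%:R.
Proof.
rewrite /col_elim_coef modnDr.
have [/andP[leji eq_mod] | not_ij] := boolP ((j <= i) && (i %% T == j %% T))%N.
  have ltjiT : (j < i + T)%N by rewrite addnS ltnS (leq_trans leji (leq_addr _ _)).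
  rewrite (ltnW ltjiT) eq_mod (ltn_eqF ltjiT).
  have dvd_ij : (T %| i - j)%N by rewrite -eqn_mod_dvd.
  by rewrite -addnBAC // divnDr ?dvdnn // divnn addn1 exprS subrr oppr0.
rewrite mulr0 sub0r; have [->|ne_j] := eqVneq j (i + T)%N.
  by rewrite leqnn modnDr eqxx subnn div0n expr0.
case: ifP => [/andP[leji' eq_mod]|]; last by rewrite oppr0.
move: not_ij; rewrite eq_mod andbT -ltnNge => ltij.
have dvd_ji : (T %| j - i)%N by rewrite -eqn_mod_dvd ?(ltnW ltij) // eq_sym.
have := dvdn_leq _ dvd_ji; rewrite subn_gt0 ltij leq_subRL ?(ltnW ltij) // => /(_ isT) leiTj.
by move: ne_j; rewrite eqn_leq leji' leiTj.
Qed.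

Lemma col_elim_coef_small k r : (r < T)%N ->
  col_elim_coef k r = if (r == k %% T)%N then 'X^(k %/ T) else 0.
Proof.
move=> ltrT; rewrite /col_elim_coef (modn_small ltrT).
rewrite eq_sym; case: eqP => [->|_]; last by rewrite andbF.
by rewrite leq_mod /= {1}(divn_eq k T) addnK mulnK.
Qed.

Lemma ebas_mul_col_elim_mx (i : 'I_n) :
  ebas n i *m col_elim_mx = \row_j col_elim_coef i j.
Proof. by apply/rowP => j; rewrite ebas_mulmx !mxE. Qed.

Lemma row_Jmat_rvec m (i : 'I_n) : i = (s + m)%N :> nat -> row i J = rvec N T a mu m.
Proof.
rewrite row_Jmat => ->; case: m => [|m].
  by rewrite addn0 leqnn /= subSS subn0 mulSn addnC.
by rewrite ifN ?addKn // -ltnNge addnS ltnS leq_addr.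
Qed.

Lemma row_elim_char_poly_top (i : 'I_n) : (i <= s)%N ->
  row i (row_elim_mx *m char_poly_mx J) = 'X *: ebas n i - ebas n (i + T).
Proof.
by move=> leis; rewrite row_mul rowK ltnNge leis subr0 ebas_mul_char_poly_mx row_Jmat leis map_ebas.
Qed.

Lemma row_elim_char_poly_bottom m (i : 'I_n) : i = (s + m.+1)%N :> nat ->
  row i (row_elim_mx *m char_poly_mx J) =
    'X *: ebas n i - (mu m.+1 * a 1)%:P *: ('X *: ebas n i.-1)
    - (mu m.+1)%:P *: \sum_(2 <= l < N.+1) (a l)%:P *: ebas n ((N - l) * T + m).
Proof.
move=> iE; have ltpi : (i.-1 < n)%N by rewrite (leq_ltn_trans (leq_pred _)).
have lt_si : (s < i)%N by rewrite iE addnS ltnS leq_addr.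
rewrite row_mul rowK lt_si mulmxBl -scalemxAl ebas_mul_char_poly_mx.
rewrite (ebas_mul_char_poly_mx (Ordinal ltpi)) (row_Jmat_rvec iE).
rewrite (@row_Jmat_rvec m (Ordinal ltpi)) /=; last by rewrite iE addnS.
rewrite iE addKn /= map_mxZ map_mxD map_mxZ map_mx_sum polyCM.
under eq_bigr do rewrite map_mxZ map_ebas addnS subn1 /=.
set v := map_mx _ (rvec _ _ _ _ m); set S := \sum_(_ <= _ < _) _.
by apply/rowP => j; rewrite !mxE; ring.
Qed.

Lemma reduced_mx_top (i j : 'I_n) : (i <= s)%N -> reduced_mx i j = - (j == (i + T)%N :> nat)%:R.
Proof.
move=> leis; have ltiTn : (i + T < n)%N by rewrite [X in (_ < X)%N]dimJE ltnS leq_add2r.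
have -> : reduced_mx i j = row i reduced_mx 0 j by rewrite [RHS]mxE.
rewrite row_mul row_elim_char_poly_top // mulmxBl -scalemxAl.
by rewrite ebas_mul_col_elim_mx (ebas_mul_col_elim_mx (Ordinal ltiTn)) !mxE col_elim_coef_shift.
Qed.

Definition apoly : {poly R} := \sum_(1 <= l < N.+1) a l *: 'X^(N - l).

Lemma apolyE : apoly = (a 1)%:P * 'X^(N'.+1) + \sum_(2 <= l < N.+1) (a l)%:P * 'X^(N - l).
Proof.
by rewrite /apoly big_ltn // mul_polyC; congr (_ + _); apply: eq_bigr => l _; rewrite mul_polyC.
Qed.

Lemma reduced_mx_bottom m (i r : 'I_n) :
  i = (s + m.+1)%N :> nat -> (m < T)%N -> (r < T)%N ->
  reduced_mx i r = (if r == (m.+1 %% T)%N :> nat then 'X^(N'.+1 + m.+1 %/ T) else 0)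
                   + (if r == m :> nat then - ((mu m.+1)%:P * apoly) else 0).
Proof.
move=> iE ltmT ltrT; have ltpi : (i.-1 < n)%N by rewrite (leq_ltn_trans (leq_pred _)).
have lt_sum_index l : (2 <= l)%N -> ((N - l) * T + m < n)%N.
  move=> le2l; rewrite dimJE ltnS leq_add //; last exact: ltnW.
  by rewrite leq_mul2r leq_subLR addnC -[N'.+1]addn1 ltn_add2l le2l orbT.
have -> : reduced_mx i r = row i reduced_mx 0 r by rewrite [RHS]mxE.
rewrite row_mul (row_elim_char_poly_bottom iE) !mulmxBl -!scalemxAl mulmx_suml.
rewrite ebas_mul_col_elim_mx (ebas_mul_col_elim_mx (Ordinal ltpi)).
rewrite (@eq_big_nat _ _ _ _ _ _
  (fun l => (a l)%:P *: \row_j col_elim_coef ((N - l) * T + m) j)); last first.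
  move=> l /andP[le2l _].
  by rewrite -scalemxAl (ebas_mul_col_elim_mx (Ordinal (lt_sum_index l le2l))).
rewrite !mxE summxE; under eq_bigr do rewrite !mxE (col_elim_coef_small _ ltrT).
have modi : (i %% T = m.+1 %% T)%N by rewrite iE modnMDl.
have divi : (i %/ T = N' + m.+1 %/ T)%N by rewrite iE divnMDl.
have modpi : (i.-1 %% T = m)%N by rewrite iE addnS modnMDl modn_small.
have divpi : (i.-1 %/ T = N')%N by rewrite iE addnS divnMDl // divn_small ?addn0.
rewrite !(col_elim_coef_small _ ltrT) modi divi modpi divpi addSn exprS.
under eq_bigr do rewrite modnMDl divnMDl // (modn_small ltmT) (divn_small ltmT) addn0.
case: (r == _ :> nat); case: (r == m :> nat); rewrite ?apolyE ?exprS polyCM; try ring.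
all: by rewrite big1 => [|l _]; [ring | rewrite mulr0].
Qed.

Lemma reduced_mx_block (leTn : (T <= n)%N) :
  \matrix_(i, j) reduced_mx (Ordinal (bottom_ord_subproof leTn i)) (widen_ord leTn j)
  = cyclic_bidiag_mx t (fun m => - ((mu m.+1)%:P * apoly)) (fun m => 'X^(N'.+1 + m.+1 %/ T)).
Proof.
apply/matrixP => i j; rewrite mxE [RHS]mxE (@reduced_mx_bottom i).
- by rewrite addrC.
- by change (n - T + i = s + i.+1)%N; rewrite dimJ_subT addSnnS.
- exact: ltn_ord.
- exact: ltn_ord j.
Qed.

Lemma prod_reduced_diag :
  \prod_(m < T) - ((mu m.+1)%:P * apoly)
  = (-1) ^+ T * ((\prod_(1 <= m < T.+1) mu m)%:P * apoly ^+ T).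
Proof.
rewrite prodrN card_ord big_split /= prodr_const card_ord rmorph_prod.
by rewrite big_add1 /= big_mkord.
Qed.

Lemma prod_reduced_superdiag : \prod_(m < T) 'X^(N'.+1 + m.+1 %/ T) = 'X^n :> {poly R}.
Proof.
rewrite big_ord_recr /= divnn /= (eq_bigr (fun _ => 'X^(N'.+1))); last first.
  by move=> i _; rewrite divn_small ?addn0 // ltnS ltn_ord.
rewrite prodr_const card_ord -exprM -exprD; congr ('X^ _).
by rewrite /dimJ subSS subn0 mulnS addn1 addnS addnC.
Qed.

Lemma char_poly_Jmat :
  char_poly J = 'X^n - (\prod_(1 <= m < T.+1) mu m)%:P * apoly ^+ T.
Proof.
have leTn : (T <= n)%N by rewrite dimJE ltnW // ltnS leq_addl.
rewrite -det_reduced_mx (det_shift_rows_leq leTn) => [|i j]; last first.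
  by rewrite dimJ_subT ltnS; exact: reduced_mx_top.
rewrite reduced_mx_block det_cyclic_bidiag prod_reduced_diag prod_reduced_superdiag dimJ_subT.
have sign : (-1) ^+ (s.+1 * T.+1)%N = (-1) ^+ t :> {poly R}.
  rewrite -signr_odd -(signr_odd _ t) oddM /= oddM /=.
  by case: (odd t); case: (odd N').
have sign_sq : (-1) ^+ t * (-1) ^+ t = 1 :> {poly R}.
  by rewrite -exprD -signr_odd addnn odd_double.
by rewrite sign [(-1) ^+ T]exprS mulN1r mulNr mulrDr mulrN !mulrA sign_sq !mul1r addrC.
Qed.

End CharPolyJmat.

Theorem theorem1 (R : realFieldType) (N T : nat) (a mu : nat -> R) :
  (2 <= N)%N -> (1 <= T)%N ->
  \sum_(1 <= l < N.+1) a l = 1 ->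
  char_poly (Jmat N T a mu) =
    'X^(dimJ N T)
    - (\prod_(1 <= m < T.+1) mu m)%:P
      * (\sum_(1 <= l < N.+1) a l *: 'X^(N - l)) ^+ T.
Proof.
case: N => [|[|N']] // _; case: T => [|t] // _ _.
exact: char_poly_Jmat.
Qed.
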